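(* For every $a\in(\frac13,\frac25)$ and $c>0$, the set $\Omega_{a,c}:=\{R\in\mathcal{A}_3\mid\|R\|^2-a\,\mathrm{scal}(R)^2\le c\}$ is Bianchi-convex but not convex.
   Context: $\mathcal{A}_3$ is the space of symmetric bilinear forms on $\Lambda^2\mathbb{R}^3$, viewed as self-adjoint endomorphisms of $\Lambda^2\mathbb{R}^3$ (with $e_i\wedge e_j$, $i<j$, orthonormal), with $\langle R,S\rangle=\mathrm{tr}(R\circ S)$, $\|R\|^2=\mathrm{tr}(R^2)$, and $\mathrm{scal}(R)=\mathrm{tr}(R)$. Supporting submanifold of a closed $C$ at $x_0\in\partial C$: a codimension-one submanifold $N\ni x_0$ such that for some open neighbourhood $U$ of $x_0$, $U\setminus N$ has two components $U_1,U_2$ with $C\cap\overline U\subseteq\overline{U_1}$; $\mathrm{II}^N_S(X,Y)=\langle\nabla_XY,\mathbf n_S\rangle$ with $\mathbf n$ the unit normal pointing away from $C$. $(T_1,T_2,T_3)\in\mathcal{A}_3^3$ satisfies the second Bianchi identity if for some orthonormal basis $(b_i)$ of $\mathbb{R}^3$, $T_i(b_j\wedge b_k)+T_j(b_k\wedge b_i)+T_k(b_i\wedge b_j)=0$ for all $i,j,k$. A closed $\Omega\subseteq\mathcal{A}_3$ is Bianchi-convex if for every $\epsilon>0$ and $R\in\partial\Omega$ there is a supporting submanifold $N$ of $\Omega$ in $R$ such that for all $S\in N$ and $(T_1,T_2,T_3)\in(T_SN)^3$ satisfying the second Bianchi identity, $\sum_i\mathrm{II}^N_S(T_i,T_i)\le\epsilon\sum_i\|T_i\|^2$.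 *)

From HB Require Import structures.
From mathcomp Require Import all_boot all_order all_algebra.
From mathcomp Require Import all_classical all_reals all_analysis.

Set Implicit Arguments.
Unset Strict Implicit.
Unset Printing Implicit Defensive.

Import Order.TTheory GRing.Theory Num.Theory.
Import numFieldNormedType.Exports.

Local Open Scope classical_set_scope.
Local Open Scope ring_scope.

(* Lambda^2 R^3 has the orthonormal basis w_0 = e1/\e2, w_1 = e1/\e3,  *)
(* w_2 = e2/\e3; an element of Lambda^2 R^3 is a column vector 'cV_3   *)
(* of coordinates in this basis.  A_3 (self-adjoint endomorphisms of   *)
(* Lambda^2 R^3) = symmetric 3x3 matrices in this basis.  We take as   *)
(* carrier of A_3 the 6-dimensional coordinate space 'rV[R]_6:          *)
(* coordinates 0,1,2 are the diagonal entries (0,0),(1,1),(2,2), and   *)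
(* coordinates 3,4,5 are the off-diagonal entries (0,1),(0,2),(1,2)    *)
(* (= (1,0),(2,0),(2,1)).  [A3toMx] is the corresponding (linear,      *)
(* bijective) map onto symmetric matrices.  The topology on A3 is the  *)
(* usual one of R^6; all metric notions (inner product, norms, unit    *)
(* normals, orthogonality) are defined through tr(R o S) as in the     *)
(* paper.                                                              *)

Section A3defs.
Variable R : realType.

Local Notation A3 := 'rV[R]_6.

Definition A3idx (i j : 'I_3) : 'I_6 :=
  inord (if i == j then nat_of_ord i else (i + j + 2)%N).

Definition A3toMx (x : A3) : 'M[R]_3 := \matrix_(i, j) x ord0 (A3idx i j).

Definition A3inner (x y : A3) : R := \tr (A3toMx x *m A3toMx y).
Definition A3sqnorm (x : A3) : R := A3inner x x.
Definition A3scal (x : A3) : R := \tr (A3toMx x).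

Definition Omega_ac (a c : R) : set A3 :=
  [set x : A3 | A3sqnorm x - a * A3scal x ^+ 2 <= c].

Definition wedge_pair (p : 'I_3) : 'I_3 * 'I_3 :=
  match nat_of_ord p with
  | 0%N => (inord 0, inord 1)
  | 1%N => (inord 0, inord 2)
  | _ => (inord 1, inord 2)
  end.

Definition wedge (u v : 'cV[R]_3) : 'cV[R]_3 :=
  \col_p (u (wedge_pair p).1 ord0 * v (wedge_pair p).2 ord0
          - u (wedge_pair p).2 ord0 * v (wedge_pair p).1 ord0).

(* Second Bianchi identity for (T_1,T_2,T_3) : the orthonormal basis
   (b_i) of R^3 is given by the columns of an orthogonal matrix O. *)
Definition second_bianchi (T : 'I_3 -> A3) : Prop :=
  exists O : 'M[R]_3, O^T *m O = 1%:M /\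
    forall i j k : 'I_3,
      A3toMx (T i) *m wedge (col j O) (col k O)
      + A3toMx (T j) *m wedge (col k O) (col i O)
      + A3toMx (T k) *m wedge (col i O) (col j O) = 0.

Fixpoint iterD (vs : seq A3) (f : A3 -> R) : A3 -> R :=
  match vs with
  | [::] => f
  | v :: vs' => fun x => derive (iterD vs' f) x v
  end.

Definition smooth_on (V : set A3) (f : A3 -> R) : Prop :=
  forall (vs : seq A3) (x : A3), V x ->
    {for x, continuous (iterD vs f)} /\ (forall v, derivable (iterD vs f) x v).

Definition codim1_submanifold (N : set A3) : Prop :=
  forall p, N p ->
    exists (V : set A3) (f : A3 -> R),
      [/\ open V, V p, smooth_on V f,
          (forall x, V x -> exists v : A3, derive f x v != 0)
        & N `&` V = [set x | V x /\ f x = 0]].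

Definition tangent_vec (N : set A3) (S X : A3) : Prop :=
  exists g : R -> A3,
    [/\ g 0 = S, (\forall t \near (0 : R), N (g t)),
        derivable g 0 1 & derive g 0 1 = X].

Definition boundary (C : set A3) : set A3 := closure C `\` interior C.

Definition two_components (D U1 U2 : set A3) : Prop :=
  exists p1 p2, [/\ D p1 /\ D p2,
    U1 = connected_component D p1, U2 = connected_component D p2,
    U1 <> U2 & D = U1 `|` U2].

Definition supporting_submanifold (C : set A3) (x0 : A3)
    (N U U1 U2 : set A3) : Prop :=
  [/\ codim1_submanifold N /\ N x0, open U /\ U x0,
      two_components (U `\` N) U1 U2
    & C `&` closure U `<=` closure U1].

(* nu is "the" unit normal to N at S pointing away from C (i.e. into U2,
   at points of N inside U). *)
Definition outer_unit_normal (N U U2 : set A3) (S nu : A3) : Prop :=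
  [/\ A3sqnorm nu = 1,
      (forall X, tangent_vec N S X -> A3inner X nu = 0)
    & (U S -> exists2 d : R, 0 < d &
          forall t : R, 0 < t < d -> U2 (S + t *: nu))].

(* Y is a vector field extending the tangent vector X at S: tangent to N
   near S, differentiable at S, Y S = X.  Then II^N_S(X,X) =
   <nabla_X Y, nu> = <derive Y S X, nu> (flat connection of A3). *)
Definition tangent_extension (N : set A3) (S X : A3) (Y : A3 -> A3) : Prop :=
  [/\ Y S = X, differentiable Y S
    & (\forall q \near S, N q -> tangent_vec N q (Y q))].

Definition bianchi_convex (Om : set A3) : Prop :=
  closed Om /\
  forall eps : R, 0 < eps -> forall x0, boundary Om x0 ->
    exists N U U1 U2, supporting_submanifold Om x0 N U U1 U2 /\
      forall S, N S -> forall nu, outer_unit_normal N U U2 S nu ->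
      forall T : 'I_3 -> A3, (forall i, tangent_vec N S (T i)) ->
        second_bianchi T ->
      forall Y : 'I_3 -> A3 -> A3, (forall i, tangent_extension N S (T i) (Y i)) ->
        \sum_i A3inner (derive (Y i) S (T i)) nu
          <= eps * \sum_i A3sqnorm (T i).

Definition convex_A3 (Om : set A3) : Prop :=
  forall x y (t : R), Om x -> Om y -> 0 <= t <= 1 ->
    Om ((1 - t) *: x + t *: y).

End A3defs.

From Pilot Require Import Defs.
From HB Require Import structures.
From mathcomp Require Import all_boot all_order all_algebra.
From mathcomp Require Import all_classical all_reals all_analysis.
From mathcomp Require Import ring lra.
Import Order.TTheory GRing.Theory Num.Theory.
Import numFieldNormedType.Exports.

(* Write [F R = |R|^2 - a scal(R)^2], so that [Omega_ac a c = {F <= c}].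

   Non-convexity: for [a > 1/3], [F] is negative on the identity ([3 - 9a]),
   so [P +- s id] lies in [Omega_ac a c] for [s] large while the midpoint [P],
   chosen with [F P > c], does not.

   Bianchi-convexity: the boundary is the level set [N = {F = c}], a smooth
   hypersurface (the gradient of [F] does not vanish on it since [c > 0]) whose
   complement has the two components [{F < c}] and [{F > c}]; it supports
   [Omega_ac a c] at each of its points. Differentiating [B(q, Y q) = 0] along
   [N], with [B] the polar form of [F], gives
   [|grad F(S)|^2 <D_X Y, nu> = -4 F(X) B(S, nu)], and [B(S, nu) >= 0] for the
   outer normal [nu]. So it suffices that [F T_1 + F T_2 + F T_3 >= 0] for every
   Bianchi triple: in the orthonormal frame [(b_j /\ b_k)] the identity becomes
   three linear relations between matrix entries, under which the sum is a sum
   of squares as soon as [a <= 2/5]. *)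

Set Implicit Arguments.
Unset Strict Implicit.
Unset Printing Implicit Defensive.

Local Open Scope classical_set_scope.
Local Open Scope ring_scope.

Lemma big_ord3 (V : nmodType) (f : 'I_3 -> V) :
  \sum_i f i = f (inord 0) + f (inord 1) + f (inord 2).
Proof.
rewrite !big_ord_recl big_ord0 addr0 addrA.
by congr (f _ + f _ + f _); apply/val_inj; rewrite /= inordK.
Qed.

Lemma ord3_cases (i : 'I_3) : [\/ i = inord 0, i = inord 1 | i = inord 2].
Proof.
by case: i => [[|[|[|//]]] Hi]; [apply: Or31 | apply: Or32 | apply: Or33];
  apply/val_inj; rewrite /= inordK.
Qed.

Lemma inord3_eq (i j : nat) : (i < 3)%N -> (j < 3)%N ->
  ((inord i : 'I_3) == inord j) = (i == j).
Proof. by move=> hi hj; rewrite -val_eqE /= !inordK. Qed.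

Section BianchiAlgebra.
Variable R : realFieldType.

(* Substitute the three constraints and complete squares: apart from
   [(2/5 - a)] times the squared traces, what remains is a sum of squares. *)
Lemma bianchi_sos (a a00 a01 a02 a11 a12 a22 b00 b01 b02 b11 b12 b22
    c00 c01 c02 c11 c12 c22 : R) :
  a <= 2/5 ->
  a00 + b01 + c02 = 0 -> a01 + b11 + c12 = 0 -> a02 + b12 + c22 = 0 ->
  0 <= (a00^+2 + a11^+2 + a22^+2 + 2 * (a01^+2 + a02^+2 + a12^+2)
          - a * (a00 + a11 + a22)^+2)
     + (b00^+2 + b11^+2 + b22^+2 + 2 * (b01^+2 + b02^+2 + b12^+2)
          - a * (b00 + b11 + b22)^+2)
     + (c00^+2 + c11^+2 + c22^+2 + 2 * (c01^+2 + c02^+2 + c12^+2)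
          - a * (c00 + c11 + c22)^+2).
Proof.
move=> ha h0 h1 h2.
have -> : a00 = - (b01 + c02) by lra.
have -> : b11 = - (a01 + c12) by lra.
have -> : c22 = - (a02 + b12) by lra.
set S := (X in 0 <= X).
have -> : S = (2/5 - a) * ((- (b01 + c02) + a11 + a22)^+2
      + (b00 - (a01 + c12) + b22)^+2 + (c00 + c11 - (a02 + b12))^+2)
  + 13/5 * (a01 + 2/13*b00 + 2/13*b22 + 3/13*c12)^+2
  + 13/5 * (a02 + 3/13*b12 + 2/13*c00 + 2/13*c11)^+2
  + 3/5 * (a11 - 2/3*a22 + 2/3*b01 + 2/3*c02)^+2
  + 2 * a12^+2
  + 1/3 * (a22 + 2*b01 + 2*c02)^+2
  + 7/13 * (b00 - 6/7*b22 + 4/7*c12)^+2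
  + (b01 - c02)^+2
  + 2 * b02^+2
  + 32/13 * (b12 + 1/8*c00 + 1/8*c11)^+2
  + 1/7 * (b22 + 4*c12)^+2
  + 1/2 * (c00 - c11)^+2
  + 2 * c01^+2.
  by rewrite /S; field.
have ha' : 0 <= 2/5 - a by rewrite subr_ge0.
by repeat apply: addr_ge0; first [exact: sqr_ge0 | apply: mulr_ge0;
  [lra | repeat apply: addr_ge0; exact: sqr_ge0]].
Qed.

Definition qform_mx (a : R) (M : 'M[R]_3) : R := \tr (M *m M) - a * \tr M ^+ 2.

Lemma qform_mx_sym (a : R) (M : 'M[R]_3) : M^T = M ->
  qform_mx a M =
    M (inord 0) (inord 0) ^+ 2 + M (inord 1) (inord 1) ^+ 2
    + M (inord 2) (inord 2) ^+ 2
    + 2 * (M (inord 0) (inord 1) ^+ 2 + M (inord 0) (inord 2) ^+ 2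
           + M (inord 1) (inord 2) ^+ 2)
    - a * (M (inord 0) (inord 0) + M (inord 1) (inord 1)
           + M (inord 2) (inord 2)) ^+ 2.
Proof.
move=> hM; have s i j : M j i = M i j by rewrite -{1}hM mxE.
rewrite /qform_mx /mxtrace !big_ord3 !mxE !big_ord3.
rewrite (s (inord 0) (inord 1)) (s (inord 0) (inord 2)) (s (inord 1) (inord 2)).
ring.
Qed.

Lemma qform_mx_bianchi_ge0 (a : R) (A B C : 'M[R]_3) : a <= 2/5 ->
  A^T = A -> B^T = B -> C^T = C ->
  (forall m, A m (inord 0) + B m (inord 1) + C m (inord 2) = 0) ->
  0 <= qform_mx a A + qform_mx a B + qform_mx a C.
Proof.
move=> ha hA hB hC hm.
have s (M : 'M[R]_3) i j : M^T = M -> M j i = M i j by move=> hM; rewrite -{1}hM mxE.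
rewrite !qform_mx_sym //; apply: bianchi_sos ha (hm _) _ _.
- by rewrite (s A (inord 1) (inord 0)) // hm.
- by rewrite (s A (inord 2) (inord 0)) // (s B (inord 2) (inord 1)) // hm.
Qed.

Lemma qform_mx_conj_orthogonal (a : R) (W M : 'M[R]_3) : W^T *m W = 1%:M ->
  qform_mx a (W^T *m M *m W) = qform_mx a M.
Proof.
move=> hW; have hW' := mulmx1C hW.
have tr_conj N : \tr (W^T *m N *m W) = \tr N.
  by rewrite mxtrace_mulC mulmxA hW' mul1mx.
have sq_conj : (W^T *m M *m W) *m (W^T *m M *m W) = W^T *m (M *m M) *m W.
  by rewrite !mulmxA -(mulmxA (W^T *m M) W) hW' mulmx1 -(mulmxA W^T M M).
by rewrite /qform_mx sq_conj !tr_conj.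
Qed.

End BianchiAlgebra.

Section WedgeFrame.
Variable R : realType.

Lemma wedge_dot (u v w z : 'cV[R]_3) :
  \sum_p wedge u v p ord0 * wedge w z p ord0 =
  (\sum_p u p ord0 * w p ord0) * (\sum_p v p ord0 * z p ord0)
  - (\sum_p u p ord0 * z p ord0) * (\sum_p v p ord0 * w p ord0).
Proof. by rewrite !big_ord3 /wedge !mxE /wedge_pair !inordK //=; ring. Qed.

Definition cols3 (u0 u1 u2 : 'cV[R]_3) : 'M[R]_3 :=
  \matrix_(p, q) nth 0 [:: u0 p ord0; u1 p ord0; u2 p ord0] q.

Lemma cols3E (u0 u1 u2 : 'cV[R]_3) :
  [/\ col (inord 0) (cols3 u0 u1 u2) = u0, col (inord 1) (cols3 u0 u1 u2) = u1
    & col (inord 2) (cols3 u0 u1 u2) = u2].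
Proof. by split; apply/colP => p; rewrite !mxE inordK. Qed.

Definition wedge_frame (O : 'M[R]_3) : 'M[R]_3 :=
  cols3 (wedge (col (inord 1) O) (col (inord 2) O))
        (wedge (col (inord 2) O) (col (inord 0) O))
        (wedge (col (inord 0) O) (col (inord 1) O)).

Lemma wedge_frame_cols (O : 'M[R]_3) :
  [/\ col (inord 0) (wedge_frame O) = wedge (col (inord 1) O) (col (inord 2) O),
      col (inord 1) (wedge_frame O) = wedge (col (inord 2) O) (col (inord 0) O)
    & col (inord 2) (wedge_frame O) = wedge (col (inord 0) O) (col (inord 1) O)].
Proof. exact: cols3E. Qed.

Lemma wedge_frame_orthogonal (O : 'M[R]_3) : O^T *m O = 1%:M ->
  (wedge_frame O)^T *m wedge_frame O = 1%:M.
Proof.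
move=> hO.
have dotO i j : \sum_p col i O p ord0 * col j O p ord0 = (i == j)%:R.
  have := congr1 (fun M : 'M[R]_3 => M i j) hO; rewrite !mxE => <-.
  by apply: eq_bigr => p _; rewrite !mxE.
apply/matrixP => i j; rewrite !mxE.
have [c0 c1 c2] := wedge_frame_cols O.
rewrite (eq_bigr (fun p => col i (wedge_frame O) p ord0 * col j (wedge_frame O) p ord0));
  last by move=> p _; rewrite !mxE.
by case: (ord3_cases i) => ->; case: (ord3_cases j) => ->;
  rewrite ?c0 ?c1 ?c2 wedge_dot !dotO !inord3_eq //=; ring.
Qed.

Lemma conj_entries_bianchi (M0 M1 M2 W : 'M[R]_3) m :
  M0 *m col (inord 0) W + M1 *m col (inord 1) W + M2 *m col (inord 2) W = 0 ->
  (W^T *m M0 *m W) m (inord 0) + (W^T *m M1 *m W) m (inord 1)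
  + (W^T *m M2 *m W) m (inord 2) = 0.
Proof.
move=> h.
have conjE M i : (W^T *m M *m W) m i = (W^T *m (M *m col i W)) m ord0.
  by rewrite colE !mulmxA -colE [RHS]mxE.
have := congr1 (fun X => (W^T *m X) m ord0) h.
by rewrite /= !mulmxDr mulmx0 !conjE !mxE.
Qed.

Lemma trmx_conj (W M : 'M[R]_3) : M^T = M -> (W^T *m M *m W)^T = W^T *m M *m W.
Proof. by move=> hM; rewrite !trmx_mul trmxK hM mulmxA. Qed.

Lemma bianchi_triple_qform_mx_ge0 (a : R) (M0 M1 M2 O : 'M[R]_3) : a <= 2/5 ->
  M0^T = M0 -> M1^T = M1 -> M2^T = M2 -> O^T *m O = 1%:M ->
  M0 *m wedge (col (inord 1) O) (col (inord 2) O)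
  + M1 *m wedge (col (inord 2) O) (col (inord 0) O)
  + M2 *m wedge (col (inord 0) O) (col (inord 1) O) = 0 ->
  0 <= qform_mx a M0 + qform_mx a M1 + qform_mx a M2.
Proof.
move=> ha s0 s1 s2 hO hB; have hW := wedge_frame_orthogonal hO.
rewrite -(qform_mx_conj_orthogonal a M0 hW) -(qform_mx_conj_orthogonal a M1 hW).
rewrite -(qform_mx_conj_orthogonal a M2 hW).
apply: (qform_mx_bianchi_ge0 ha); rewrite ?trmx_conj // => m.
by apply: conj_entries_bianchi; have [-> -> ->] := wedge_frame_cols O.
Qed.

End WedgeFrame.

Lemma A3toMx_sym (R : realType) (x : 'rV[R]_6) : (A3toMx x)^T = A3toMx x.
Proof.
apply/matrixP => i j; rewrite !mxE /A3idx eq_sym.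
by case: eqP => [->//|_]; rewrite (addnC j i).
Qed.

Lemma second_bianchi_ge0 (R : realType) (a : R) (T : 'I_3 -> 'rV[R]_6) :
  a <= 2/5 -> second_bianchi T -> 0 <= \sum_i qform_mx a (A3toMx (T i)).
Proof.
move=> ha [Ob [hOb hB]]; rewrite big_ord3.
apply: bianchi_triple_qform_mx_ge0 ha _ _ _ hOb (hB (inord 0) (inord 1) (inord 2));
  exact: A3toMx_sym.
Qed.

Section QuadraticForm.
Variable R : realType.
Local Notation A3 := 'rV[R]_6.

Definition crd (x : A3) (k : nat) : R := x ord0 (inord k).

Lemma crdD x y k : crd (x + y) k = crd x k + crd y k. Proof. by rewrite /crd mxE. Qed.
Lemma crdZ t x k : crd (t *: x) k = t * crd x k. Proof. by rewrite /crd mxE. Qed.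
Lemma crdN x k : crd (- x) k = - crd x k. Proof. by rewrite /crd mxE. Qed.
Lemma crdB x y k : crd (x - y) k = crd x k - crd y k. Proof. by rewrite /crd !mxE. Qed.
Lemma crd0 k : crd 0 k = 0. Proof. by rewrite /crd mxE. Qed.

Definition row6 (l : seq R) : A3 := \row_(i < 6) nth 0 l i.

Lemma crd_row6 l k : (k < 6)%N -> crd (row6 l) k = nth 0 l k.
Proof. by move=> hk; rewrite /crd mxE inordK. Qed.

Definition dot6 (x y : A3) : R :=
  crd x 0 * crd y 0 + crd x 1 * crd y 1 + crd x 2 * crd y 2
  + 2 * (crd x 3 * crd y 3 + crd x 4 * crd y 4 + crd x 5 * crd y 5).

Definition tr6 (x : A3) : R := crd x 0 + crd x 1 + crd x 2.

Lemma A3innerE (x y : A3) : A3inner x y = dot6 x y.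
Proof.
rewrite /A3inner /mxtrace /A3toMx /dot6 /crd.
rewrite !big_ord_recr big_ord0 /= !mxE !big_ord_recr big_ord0 /= !mxE /A3idx /=.
by rewrite !big_ord0 !addn0 !add0n /=; ring.
Qed.

Lemma A3scalE (x : A3) : A3scal x = tr6 x.
Proof.
rewrite /A3scal /mxtrace /A3toMx /tr6 /crd.
by rewrite !big_ord_recr big_ord0 /= !mxE /A3idx /=; ring.
Qed.

Lemma dot6_ge0 (x : A3) : 0 <= dot6 x x.
Proof.
rewrite /dot6 -!expr2.
by apply: addr_ge0; [rewrite !addr_ge0 ?sqr_ge0 | rewrite mulr_ge0 ?addr_ge0 ?sqr_ge0].
Qed.

Lemma dot6_self_le0 (z y : A3) : dot6 z z <= 0 -> dot6 z y = 0.
Proof.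
rewrite /dot6 => h.
have e0 : crd z 0 = 0 by nra.
have e1 : crd z 1 = 0 by nra.
have e2 : crd z 2 = 0 by nra.
have e3 : crd z 3 = 0 by nra.
have e4 : crd z 4 = 0 by nra.
have e5 : crd z 5 = 0 by nra.
by rewrite e0 e1 e2 e3 e4 e5; ring.
Qed.

Variable a : R.

Definition bform (x y : A3) : R := dot6 x y - a * (tr6 x * tr6 y).
Definition qform (x : A3) : R := bform x x.

Definition id6 : A3 := row6 [:: 1; 1; 1; 0; 0; 0].

(* Half the gradient of [qform] for the inner product [dot6]. *)
Definition grad (S : A3) : A3 := S - (a * tr6 S) *: id6.

Lemma qform_mx_A3toMx (x : A3) : qform_mx a (A3toMx x) = qform x.
Proof.
have -> : qform_mx a (A3toMx x) = A3inner x x - a * A3scal x ^+ 2 by [].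
by rewrite A3innerE A3scalE /qform /bform expr2.
Qed.

Lemma Omega_acE (c : R) : Omega_ac a c = [set x | qform x <= c].
Proof. by apply/funext => x; rewrite /Omega_ac /= -qform_mx_A3toMx. Qed.

Lemma dot6_grad (S v : A3) : dot6 (grad S) v = bform S v.
Proof.
rewrite /grad /bform /dot6 /tr6 !(crdB, crdZ) /id6 !crd_row6 //=; ring.
Qed.

Lemma dot6_grad_gt0 (S : A3) : qform S != 0 -> 0 < dot6 (grad S) (grad S).
Proof.
move=> hS; rewrite ltNge; apply/negP => /(dot6_self_le0 S).
by rewrite dot6_grad; apply/eqP.
Qed.

End QuadraticForm.

Arguments id6 {R}.

Ltac crd_simpl := rewrite /qform /bform /dot6 /tr6 ?(crdD, crdZ, crdN, crdB, crd0).

Section QuadraticFormAlgebra.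
Variables (R : realType) (a : R).
Local Notation A3 := 'rV[R]_6.
Local Notation F := (qform a).
Local Notation B := (bform a).

Lemma bformC (x y : A3) : B x y = B y x.
Proof. crd_simpl; ring. Qed.

Lemma bformZr (x v : A3) k : B x (k *: v) = k * B x v.
Proof. crd_simpl; ring. Qed.

Lemma bform_lincomb (S Z G : A3) (k l : R) :
  B S (k *: Z - l *: G) = k * B S Z - l * B S G.
Proof. crd_simpl; ring. Qed.

Lemma dot6_lincomb (Z G nu : A3) (k l : R) :
  dot6 (k *: Z - l *: G) nu = k * dot6 Z nu - l * dot6 G nu.
Proof. crd_simpl; ring. Qed.

Lemma qformZ t (x : A3) : F (t *: x) = t ^+ 2 * F x.
Proof. crd_simpl; ring. Qed.

Lemma qform_line (Q v : A3) (s : R) :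
  F (Q + s *: v) = F Q + 2 * s * B Q v + s ^+ 2 * F v.
Proof. crd_simpl; ring. Qed.

End QuadraticFormAlgebra.

Lemma derive_quadratic_line (R : realType) (V : normedModType R) (f : V -> R)
    (x v : V) (D E : R) :
  (forall h : R, f (h *: v + x) = f x + h * D + h ^+ 2 * E) ->
  derivable f x v /\ derive f x v = D.
Proof.
move=> hf.
have hq : (fun h : R => h^-1 *: ((f \o shift x) (h *: v) - f x)) @ 0^' --> D.
  have hg : (fun h : R => D + h * E) @ 0^' --> D + 0 * E.
    by apply: cvgD; [exact: cvg_cst | apply: cvgM; [exact: cvg_within | exact: cvg_cst]].
  rewrite mul0r addr0 in hg; apply: cvg_trans hg; apply: near_eq_cvg.
  rewrite near_withinE; apply: nearW => h /= h0.
  by rewrite hf /GRing.scale /=; field.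
by split; [exact: cvgP hq | exact: cvg_lim hq].
Qed.

Section Smoothness.
Variables (R : realType) (a : R).
Local Notation A3 := 'rV[R]_6.
Local Notation F := (qform a).
Local Notation B := (bform a).

Section Limits.
Context {T : Type} (Fl : set_system T) {FF : Filter Fl}.

Lemma cvg_crd (u : T -> A3) x k : u @ Fl --> x -> (fun t => crd (u t) k) @ Fl --> crd x k.
Proof. exact: (continuous_cvg _ (@coord_continuous _ 1 6 ord0 (inord k) x)). Qed.

Ltac cvg_poly := repeat match goal with
  | |- (fun _ => crd _ _) @ _ --> _ => apply: cvg_crd; eassumption
  | |- (fun _ => _ + _) @ _ --> _ => apply: cvgD
  | |- (fun _ => _ * _) @ _ --> _ => apply: cvgM
  | |- (fun _ => - _) @ _ --> _ => apply: cvgN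
  | |- _ => exact: cvg_cst
  end.

Lemma cvg_dot6 (u w : T -> A3) x y : u @ Fl --> x -> w @ Fl --> y ->
  (fun t => dot6 (u t) (w t)) @ Fl --> dot6 x y.
Proof. by move=> hu hw; rewrite /dot6; cvg_poly. Qed.

Lemma cvg_bform (u w : T -> A3) x y : u @ Fl --> x -> w @ Fl --> y ->
  (fun t => B (u t) (w t)) @ Fl --> B x y.
Proof.
move=> hu hw; rewrite /bform; apply: cvgB; first exact: cvg_dot6.
by rewrite /tr6; cvg_poly.
Qed.

End Limits.

Lemma qform_continuous : continuous F.
Proof. by move=> x; apply: (@cvg_bform _ (nbhs x) _ id id); exact: cvg_id. Qed.



Definition quad_affine (al : R) (l : A3) (be : R) (x : A3) : R :=
  al * F x + dot6 l x + be.

Lemma quad_affine_derive al l be x v :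
  derivable (quad_affine al l be) x v /\
  derive (quad_affine al l be) x v = quad_affine 0 ((2 * al) *: grad a v) (dot6 l v) x.
Proof.
have [hd ->] : derivable (quad_affine al l be) x v /\
    derive (quad_affine al l be) x v = 2 * al * B x v + dot6 l v.
  apply: (derive_quadratic_line (E := al * F v)) => h.
  by rewrite /quad_affine; crd_simpl; ring.
split => //; rewrite /quad_affine.
have -> : dot6 ((2 * al) *: grad a v) x = 2 * al * B v x.
  by rewrite -dot6_grad /dot6 !crdZ; ring.
by rewrite bformC; ring.
Qed.

Lemma iterD_quad_affine (c : R) vs :
  exists al l be, Defs.iterD vs (fun x => F x - c) = quad_affine al l be.
Proof.
elim: vs => [|v vs [al [l [be IH]]]] /=.
  by exists 1, 0, (- c); apply: funext => x; rewrite /quad_affine; crd_simpl; ring.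
exists 0, ((2 * al) *: grad a v), (dot6 l v); apply: funext => x.
by rewrite IH; case: (quad_affine_derive al l be x v).
Qed.

Lemma quad_affine_continuous al l be : continuous (quad_affine al l be).
Proof.
move=> x; rewrite /continuous_at /quad_affine.
apply: (@cvgD _ _ _ (nbhs x)); last exact: cvg_cst.
apply: cvgD; first by apply: cvgM; [exact: cvg_cst | exact: qform_continuous].
by apply: (@cvg_dot6 _ (nbhs x) _ (cst l) id); [exact: cvg_cst | exact: cvg_id].
Qed.

Lemma qform_sub_smooth (c : R) (V : set A3) : smooth_on V (fun x => F x - c).
Proof.
move=> vs x _; have [al [l [be ->]]] := iterD_quad_affine c vs.
split; first exact: quad_affine_continuous.
by move=> v; case: (quad_affine_derive al l be x v).
Qed.

Lemma derive_qform_sub (c : R) x v : derive (fun x => F x - c) x v = 2 * B x v.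
Proof.
apply: (proj2 (derive_quadratic_line (E := F v) _)) => h.
by crd_simpl; ring.
Qed.

End Smoothness.

Lemma segment_connected_component (R : realType) (V : normedModType R) (D : set V)
    (P v : V) :
  (forall s : R, 0 <= s <= 1 -> D (P + s *: v)) -> connected_component D P (P + v).
Proof.
move=> hs; exists ((fun s : R => P + s *: v) @` `[0, 1]); last first.
  by exists 1; [rewrite /= in_itv /= ler01 lexx | rewrite scale1r].
split.
- by exists 0; [rewrite /= in_itv /= lexx ler01 | rewrite scale0r addr0].
- by move=> _ [s hs' <-]; apply: hs; move: hs'; rewrite /= in_itv.
- apply: connected_continuous_connected; first exact: segment_connected.
  apply: continuous_subspaceT => s.
  apply: (@continuousD _ _ _ (fun _ : R => P) (fun s : R => s *: v)); first exact: cvg_cst.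
  exact: scalel_continuous.
Qed.

(* [P] is clopen in the complement of [N]. *)
Lemma connected_component_sub_open (T : topologicalType) (P N : set T) p :
  open P -> closed (P `|` N) -> P p -> ~ N p ->
  connected_component (setT `\` N) p `<=` P.
Proof.
move=> oP cP hp hpN.
have CD := @connected_component_sub _ (setT `\` N) p.
suff e : connected_component (setT `\` N) p `&` P = connected_component (setT `\` N) p.
  by move=> y; rewrite -e => -[].
apply: (@component_connected _ (setT `\` N) p).
- by exists p; split => //; apply: connected_component_refl.
- by exists P.
- exists (P `|` N) => //.
  apply/seteqP; split => y [hy1 hy2]; split => //; first by left.
  by case: hy2 => // hN; have [_ hN'] := CD _ hy1.
Qed.

Definition E01 {R : realType} : 'rV[R]_6 := row6 [:: 0; 0; 0; 1; 0; 0].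
Definition E02 {R : realType} : 'rV[R]_6 := row6 [:: 0; 0; 0; 0; 1; 0].

Definition level_set (R : realType) (a c : R) : set 'rV[R]_6 := [set x | qform a x = c].

Section LevelSetTopology.
Variables (R : realType) (a c : R).
Hypothesis c_gt0 : 0 < c.
Local Notation A3 := 'rV[R]_6.
Local Notation F := (qform a).
Local Notation B := (bform a).
Local Notation N := (level_set a c).

Lemma open_qform_lt : open [set x : A3 | F x < c].
Proof. exact: ((continuousP _).1 (@qform_continuous _ a) _ (open_lt (y:=c))). Qed.

Lemma open_qform_gt : open [set x : A3 | c < F x].
Proof. exact: ((continuousP _).1 (@qform_continuous _ a) _ (open_gt (y:=c))). Qed.

Lemma closed_qform_le : closed [set x : A3 | F x <= c].
Proof.
exact: ((continuous_closedP _).1 (@qform_continuous _ a) _ (closed_le (y:=c))).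
Qed.

Lemma closed_qform_ge : closed [set x : A3 | c <= F x].
Proof.
exact: ((continuous_closedP _).1 (@qform_continuous _ a) _ (closed_ge (y:=c))).
Qed.

Lemma boundary_Omega_ac x : boundary (Omega_ac a c) x -> F x = c.
Proof.
rewrite Omega_acE /boundary => -[hcl hint].
have hle : F x <= c by move: hcl; rewrite -(closure_id _).1 //; exact: closed_qform_le.
apply/eqP; rewrite eq_le hle /= leNgt; apply/negP => hlt; apply: hint.
have := open_qform_lt; rewrite openE => /(_ x hlt).
by apply: interiorS => y /=; exact: ltW.
Qed.

Lemma qform_lt_component0 x : F x < c -> connected_component (setT `\` N) 0 x.
Proof.
move=> hx; rewrite -[x]add0r; apply: segment_connected_component => s /andP[s0 s1].
split => //; rewrite /level_set /= add0r qformZ => e.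
have s2 : s ^+ 2 <= 1 by rewrite expr_le1.
have : s ^+ 2 * F x < c.
  case: (lerP (F x) 0) => hf.
  - exact: le_lt_trans (mulr_ge0_le0 (sqr_ge0 s) hf) c_gt0.
  - exact: le_lt_trans (ler_piMl (ltW hf) s2) hx.
by rewrite e ltxx.
Qed.

Lemma qform_gt_segment Q v : c < F Q -> 0 <= B Q v -> 0 <= F v ->
  connected_component (setT `\` N) Q (Q + v).
Proof.
move=> hQ hB hv; apply: segment_connected_component => s /andP[s0 s1].
split => //; rewrite /level_set /= qform_line => e.
by have := mulr_ge0 s0 hB; have := mulr_ge0 (sqr_ge0 s) hv; lra.
Qed.

Lemma qform_gt_link x z : c < F x -> c < F z -> 0 <= B x z ->
  connected_component (setT `\` N) x z.
Proof.
move=> hx hz hB.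
have h1 := qform_gt_segment hx hB (ltW (lt_trans c_gt0 hz)).
have h2 := qform_gt_segment hz (v := x) _ (ltW (lt_trans c_gt0 hx)).
rewrite bformC addrC in h2; have {}h2 := h2 hB.
exact: connected_component_trans h1 (connected_component_sym h2).
Qed.

Lemma qform_E01 k : F (k *: E01) = 2 * k ^+ 2.
Proof. by rewrite /E01; crd_simpl; rewrite !crd_row6 //=; ring. Qed.

Lemma qform_E02 k : F (k *: E02) = 2 * k ^+ 2.
Proof. by rewrite /E02; crd_simpl; rewrite !crd_row6 //=; ring. Qed.

Lemma bform_E01_E02 k l : B (k *: E01) (l *: E02) = 0.
Proof. by rewrite /E01 /E02; crd_simpl; rewrite !crd_row6 //=; ring. Qed.

Local Notation P2 := ((c + 1) *: E02).

Lemma qform_P2_gt : c < F P2.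
Proof. by rewrite qform_E02; have := c_gt0; nra. Qed.

(* Pass through [k E01], [k = +-(c + 1)] with the sign making [B x (k E01) >= 0];
   [E01] and [P2] are [B]-orthogonal. *)
Lemma qform_gt_componentP2 x : c < F x -> connected_component (setT `\` N) P2 x.
Proof.
move=> hx; have := c_gt0 => hc.
have [k [hk hB]] : exists k, k ^+ 2 = (c + 1) ^+ 2 /\ 0 <= B x (k *: E01).
  case: (lerP 0 (B x E01)) => hb.
  - by exists (c + 1); rewrite bformZr; split => //; apply: mulr_ge0 => //; lra.
  - by exists (- (c + 1)); rewrite sqrrN bformZr; split => //; nra.
have hE : c < F (k *: E01) by rewrite qform_E01 hk; nra.
apply: connected_component_sym; apply: (connected_component_trans (y := k *: E01)).
- exact: qform_gt_link.
- by apply: qform_gt_link hE qform_P2_gt _; rewrite bform_E01_E02.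
Qed.

Lemma componentP2_qform_gt :
  connected_component (setT `\` N) P2 `<=` [set x | c < F x].
Proof.
apply: connected_component_sub_open open_qform_gt _ qform_P2_gt _.
- rewrite (_ : _ `|` _ = [set x | c <= F x]); first exact: closed_qform_ge.
  apply/seteqP; split => y /=; first by case=> [/ltW|->].
  by rewrite le_eqVlt => /orP[/eqP|]; [right|left].
- by rewrite /level_set /= => h; have := qform_P2_gt; rewrite h ltxx.
Qed.

Lemma level_set_two_components :
  two_components (setT `\` N) (connected_component (setT `\` N) 0)
    (connected_component (setT `\` N) P2).
Proof.
have F0 : F 0 = 0 by crd_simpl; ring.
have := c_gt0 => hc.
have D0 : (setT `\` N) 0 by split => //; rewrite /level_set /= F0 => h; lra.
have DP2 : (setT `\` N) P2.
  by split => //; rewrite /level_set /= => h; have := qform_P2_gt; rewrite h ltxx.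
exists 0, P2; split => //.
- move=> e; have h0 : connected_component (setT `\` N) P2 0.
    by rewrite -e; exact: connected_component_refl.
  by have := componentP2_qform_gt h0; rewrite /= F0; lra.
- apply/seteqP; split => x.
  + move=> [_ hN]; case: (ltgtP (F x) c) => h.
    * by left; exact: qform_lt_component0.
    * by right; exact: qform_gt_componentP2.
    * by exfalso; exact: hN.
  + by case => h; exact: connected_component_sub h.
Qed.

Lemma qform_le_closure_lt x : F x <= c -> closure [set y | F y < c] x.
Proof.
move=> hx B hB.
have : nbhs (1 : R) [set s : R | B (s *: x)].
  by move: hB; rewrite -{1}[x]scale1r; exact: (@scalel_continuous _ _ x 1).
move=> /nbhs_ballP [e /= e_gt0 he].
pose d := Num.min (e / 2) (1 / 2).
have d_gt0 : 0 < d by rewrite lt_min !divr_gt0.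
have d_le_e : d <= e / 2 by rewrite ge_min lexx.
have d_le1 : d <= 1 / 2 by rewrite ge_min lexx orbT.
exists ((1 - d) *: x); split.
- rewrite /= qformZ; have := c_gt0 => hc.
  have hs : (1 - d) ^+ 2 < 1 by nra.
  have hs1 : 0 < 1 - (1 - d) ^+ 2 by lra.
  case: (lerP (F x) 0) => hf; first by nra.
  by have := mulr_gt0 hs1 hf; nra.
- apply: he; rewrite -ball_normE /ball_ /= opprB addrC subrK ger0_norm; lra.
Qed.

End LevelSetTopology.

Lemma outer_normal_bform_ge0 (R : realType) (a c : R) (S nu : 'rV[R]_6) (d : R) :
  qform a S = c -> 0 < d ->
  (forall t, 0 < t < d -> c < qform a (S + t *: nu)) -> 0 <= bform a S nu.
Proof.
move=> hS hd h; rewrite leNgt; apply/negP => hB.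
set q := qform a nu; set b := - bform a S nu.
have b_gt0 : 0 < b by rewrite oppr_gt0.
have q1_gt0 : 0 < `|q| + 1 by rewrite ltr_wpDl.
pose t := Num.min (d / 2) (b / (`|q| + 1)).
have t_gt0 : 0 < t by rewrite lt_min !divr_gt0.
have t_le : t <= d / 2 by rewrite ge_min lexx.
have tq1 : t * (`|q| + 1) <= b by rewrite -ler_pdivlMr // ge_min lexx orbT.
have tq : t * q <= t * `|q| by rewrite ler_pM2l // ler_norm.
have td : t < d by lra.
have := h t; rewrite t_gt0 td => /(_ isT).
rewrite qform_line hS -/q -[bform a S nu]opprK -/b => hc.
have : t * (t * q - 2 * b) < 0 by rewrite pmulr_rlt0 //; lra.
lra.
Qed.

Section DifferenceQuotient.
Variables (R : realType) (V : normedModType R).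

Lemma derive_at0P (g : R -> V) (X : V) :
  (fun h : R => h^-1 *: (g h - g 0)) @ 0^' --> X <->
  derivable g 0 1 /\ derive g 0 1 = X.
Proof.
rewrite /derivable /derive.
have -> : (fun h : R => h^-1 *: ((g \o shift 0) (h *: 1) - g 0)) =
    (fun h => h^-1 *: (g h - g 0)).
  by apply: funext => h; rewrite /= addr0 /GRing.scale /= mulr1.
by split => [hq | [hd <-]]; [split; [exact: cvgP hq | exact: cvg_lim hq] | exact: hd].
Qed.

End DifferenceQuotient.

Lemma cvg_at0_unique (R : realType) (f : R -> R) (l l' : R) :
  f @ 0^' --> l -> f @ 0^' --> l' -> l = l'.
Proof. by move=> h1 h2; exact: (cvg_unique _ h1 h2). Qed.

Section TangentSpace.
Variables (R : realType) (a c : R).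
Local Notation A3 := 'rV[R]_6.
Local Notation F := (qform a).
Local Notation B := (bform a).
Local Notation N := (level_set a c).

Lemma tangent_vec_bform (S X : A3) : tangent_vec N S X -> B S X = 0.
Proof.
move=> [g [g0 gN gd gX]].
have hDq : (fun h : R => h^-1 *: (g h - S)) @ 0^' --> X by rewrite -g0; apply/derive_at0P.
pose Dq h := h^-1 *: (g h - S).
have FS : F S = c by rewrite -g0; exact: (nbhs_singleton gN).
pose phi h := 2 * B S (Dq h) + h * F (Dq h).
have l1 : phi @ 0^' --> 2 * B S X + 0 * F X.
  apply: cvgD; first by apply: cvgM; [exact: cvg_cst | exact: cvg_bform (cvg_cst S) hDq].
  by apply: cvgM; [exact: cvg_within | exact: (cvg_bform hDq hDq)].
have l2 : phi @ 0^' --> 0.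
  apply: cvg_near_cst; rewrite near_withinE; apply: filterS gN => h hN h0.
  have e : g h = S + h *: Dq h by rewrite /Dq scalerA mulfV // scale1r addrC subrK.
  move: hN; rewrite /level_set /= e qform_line FS => hN.
  have : h * phi h = 0 by rewrite /phi; lra.
  by move/eqP; rewrite mulf_eq0 (negbTE h0) /= => /eqP.
by have := cvg_at0_unique l1 l2; lra.
Qed.

Lemma tangent_extension_bform (S T : A3) (Y : A3 -> A3) :
  tangent_vec N S T -> tangent_extension N S T Y -> B S (derive Y S T) = - F T.
Proof.
move=> hT [YS dY hnear]; have BST := tangent_vec_bform hT.
case: hT => g [g0 gN gd gX].
have hDq : (fun h : R => h^-1 *: (g h - S)) @ 0^' --> T by rewrite -g0; apply/derive_at0P.
have dg : differentiable g 0 by apply/derivable1_diffP.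
have gc : g @ (0 : R) --> S by rewrite -g0; exact: differentiable_continuous.
have dYg : differentiable (Y \o g) 0 by apply: differentiable_comp; rewrite ?g0.
have hDY : (fun h : R => h^-1 *: (Y (g h) - Y S)) @ 0^' --> derive Y S T.
  have chain : derive (Y \o g) 0 1 = derive Y S T.
    by rewrite deriveE // diff_comp ?g0 //= -[X in 'd Y S X]deriveE // gX deriveE.
  have -> : Y S = (Y \o g) 0 by rewrite /= g0.
  by rewrite -chain; apply/(derive_at0P (Y \o g)); split => //; apply/derivable1_diffP.
have Ygc : (fun h : R => Y (g h)) @ 0^' --> T.
  by apply: cvg_within_filter; rewrite -YS -g0; exact: differentiable_continuous dYg.
pose phi h := B (h^-1 *: (g h - S)) (Y (g h)) + B S (h^-1 *: (Y (g h) - Y S)).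
have l1 : phi @ 0^' --> B T T + B S (derive Y S T).
  by apply: cvgD; [exact: (cvg_bform hDq Ygc) | exact: (cvg_bform (cvg_cst S) hDY)].
have l2 : phi @ 0^' --> 0.
  apply: cvg_near_cst; rewrite near_withinE.
  apply: filterS2 gN (gc _ hnear) => h hN hP h0.
  have e0 : B (g h) (Y (g h)) = 0 by apply: tangent_vec_bform; exact: hP.
  have : h * phi h = B (g h) (Y (g h)) - B S (Y S).
    by rewrite /phi; crd_simpl; field.
  by rewrite e0 YS BST subrr => /eqP; rewrite mulf_eq0 (negbTE h0) /= => /eqP.
by have := cvg_at0_unique l1 l2; rewrite /qform; lra.
Qed.

Section LevelCurve.
Hypothesis c_gt0 : 0 < c.
Variables S X : A3.
Hypotheses (hS : F S = c) (hB : B S X = 0).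

(* Since [F (S + t X) = c + t^2 F X], rescaling the line [S + t X] radially
   brings it back onto the level set [N]. *)
Let k (t : R) := c + t * t * F X.
Let rho (t : R) := Num.sqrt (c / k t).
Let g (t : R) := rho t *: (S + t *: X).

Let k_cvg : k @ (0 : R) --> c.
Proof.
have : k @ (0 : R) --> c + 0 * 0 * F X.
  apply: cvgD; first exact: cvg_cst.
  by apply: cvgM; [apply: cvgM; exact: cvg_id | exact: cvg_cst].
by rewrite !mul0r addr0.
Qed.

Let k_gt0 : \forall t \near (0 : R), 0 < k t.
Proof. exact: cvgr_gt c k_cvg 0 c_gt0. Qed.

Let rho_cvg : rho @ (0 : R) --> (1 : R).
Proof.
have h1 : (fun t => c / k t) @ (0 : R) --> (1 : R).
  rewrite -(divff (lt0r_neq0 c_gt0)).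
  by apply: cvgM; [exact: cvg_cst | exact: cvgV (lt0r_neq0 c_gt0) k_cvg].
rewrite -sqrtr1; exact: (continuous_cvg _ (@sqrt_continuous R 1) h1).
Qed.

Let level_curve_on : \forall t \near (0 : R), N (g t).
Proof.
apply: filterS k_gt0 => t kt.
rewrite /level_set /= /g qformZ qform_line hS hB mulr0 addr0 sqr_sqrtr; last first.
  by rewrite divr_ge0 // ltW.
by rewrite /k; field; apply: lt0r_neq0.
Qed.

Let level_curve_quotient : (fun h : R => h^-1 *: (g h - S)) @ 0^' --> X.
Proof.
pose psi h := - (h * F X) / (k h * (rho h + 1)).
have psi_cvg : psi @ (0 : R) --> (0 : R).
  have : psi @ (0 : R) --> - (0 * F X) * (c * (1 + 1))^-1.
    apply: cvgM; first by apply: cvgN; apply: cvgM; [exact: cvg_id | exact: cvg_cst].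
    apply: cvgV; first by rewrite mulf_neq0 ?lt0r_neq0 //; lra.
    by apply: cvgM; [exact: k_cvg | apply: cvgD; [exact: rho_cvg | exact: cvg_cst]].
  by rewrite mul0r oppr0 mul0r.
have hl : (fun h : R => psi h *: S + rho h *: X) @ 0^' --> 0 *: S + 1 *: X.
  by apply: cvgD; apply: cvgZ; [exact: cvg_within_filter psi_cvg | exact: cvg_cst
    | exact: cvg_within_filter rho_cvg | exact: cvg_cst].
rewrite scale0r add0r scale1r in hl; apply: cvg_trans hl; apply: near_eq_cvg.
rewrite near_withinE; apply: filterS k_gt0 => h kh h0.
have rho_ge0 : 0 <= rho h by exact: sqrtr_ge0.
have r1 : rho h + 1 != 0 by apply: lt0r_neq0; lra.
have rsq : rho h ^+ 2 = c / k h by rewrite sqr_sqrtr // divr_ge0 // ltW.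
have hpsi : h^-1 * (rho h - 1) = psi h.
  have e : (rho h - 1) * (rho h + 1) = - (h * h * F X) / k h.
    by rewrite -subr_sqr expr1n rsq /k; field; apply: lt0r_neq0.
  have -> : rho h - 1 = (- (h * h * F X) / k h) / (rho h + 1) by rewrite -e mulfK.
  by rewrite /psi; field; rewrite r1 lt0r_neq0 //.
by apply/rowP => i; rewrite /g !mxE -hpsi; field.
Qed.

Lemma tangent_vec_level : tangent_vec N S X.
Proof.
have g0 : g 0 = S.
  by rewrite /g /rho /k !mul0r addr0 divff ?lt0r_neq0 // sqrtr1 scale1r scale0r addr0.
have [hd hX] : derivable g 0 1 /\ derive g 0 1 = X.
  by apply/derive_at0P; rewrite g0; exact: level_curve_quotient.
by exists g; split.
Qed.

End LevelCurve.

End TangentSpace.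

Section BianchiConvexity.
Variables (R : realType) (a c : R).
Hypothesis c_gt0 : 0 < c.
Local Notation A3 := 'rV[R]_6.
Local Notation F := (qform a).
Local Notation B := (bform a).
Local Notation N := (level_set a c).
Local Notation U1 := (connected_component (setT `\` N) 0).
Local Notation U2 := (connected_component (setT `\` N) ((c + 1) *: E02)).

Lemma level_set_submanifold : codim1_submanifold N.
Proof.
move=> p hp; exists [set x | 0 < F x], (fun x => F x - c); split.
- exact: ((continuousP _).1 (@qform_continuous _ a) _ (open_gt (y := 0))).
- by rewrite /= hp.
- exact: qform_sub_smooth.
- move=> x hx; exists (grad a x); rewrite derive_qform_sub -dot6_grad.
  by rewrite mulf_neq0 // lt0r_neq0 // dot6_grad_gt0 // lt0r_neq0.
- apply/seteqP; split => x /= [hx hV]; split => //; first by rewrite hx subrr.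
  by apply/eqP; rewrite -subr_eq0; apply/eqP.
Qed.

Lemma level_set_supporting x0 : F x0 = c ->
  supporting_submanifold (Omega_ac a c) x0 N setT U1 U2.
Proof.
move=> hx0; split => //.
- by split; [exact: level_set_submanifold | exact: hx0].
- by split => //; exact: openT.
- exact: level_set_two_components.
- move=> x [hx _]; rewrite Omega_acE in hx.
  apply: closureS (qform_le_closure_lt c_gt0 hx) => y hy.
  exact: qform_lt_component0.
Qed.

(* [T_S N] is the [dot6]-orthogonal of [grad a S], so the outer normal is a
   multiple of [grad a S] and only the normal part of [derive Y S T],
   computed by [tangent_extension_bform], contributes. *)
Lemma second_fundamental_form_level S nu T (Y : A3 -> A3) :
  N S -> (forall X, tangent_vec N S X -> A3inner X nu = 0) ->
  tangent_vec N S T -> tangent_extension N S T Y ->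
  dot6 (grad a S) (grad a S) * A3inner (derive Y S T) nu = - F T * B S nu.
Proof.
move=> hS hnu hT hY; set G := grad a S; set Z := derive Y S T.
have hZ : B S Z = - F T := tangent_extension_bform hT hY.
have hX : tangent_vec N S (dot6 G G *: Z - B S Z *: G).
  by apply: tangent_vec_level => //; rewrite bform_lincomb -(dot6_grad a S G); ring.
have := hnu _ hX; rewrite !A3innerE dot6_lincomb (dot6_grad a S nu) hZ.
by lra.
Qed.

Lemma Omega_ac_bianchi_convex : a <= 2/5 -> bianchi_convex (Omega_ac a c).
Proof.
move=> ha; split; first by rewrite Omega_acE; exact: closed_qform_le.
move=> eps eps_gt0 x0 hx0.
exists N, setT, U1, U2; split; first exact/level_set_supporting/boundary_Omega_ac.
move=> S hS nu [_ hnuT hnuU] T hT hBi Y hY.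
have [d d_gt0 hd] := hnuU I.
have B_ge0 : 0 <= B S nu.
  apply: (outer_normal_bform_ge0 hS d_gt0) => t ht.
  exact: (componentP2_qform_gt c_gt0 (hd t ht)).
have G_gt0 : 0 < dot6 (grad a S) (grad a S).
  by apply: dot6_grad_gt0; rewrite hS lt0r_neq0.
have F_ge0 : 0 <= \sum_i F (T i).
  by have := second_bianchi_ge0 ha hBi; under eq_bigr do rewrite qform_mx_A3toMx.
have II_le0 : \sum_i A3inner (derive (Y i) S (T i)) nu <= 0.
  rewrite -(pmulr_rle0 _ G_gt0) mulr_sumr.
  under eq_bigr do rewrite second_fundamental_form_level //.
  by rewrite -mulr_suml sumrN mulNr oppr_le0 mulr_ge0.
apply: le_trans II_le0 _; apply: mulr_ge0; first exact: ltW.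
by apply: sumr_ge0 => i _; rewrite /A3sqnorm A3innerE dot6_ge0.
Qed.

End BianchiConvexity.

Section NonConvexity.
Variables (R : realType) (a c : R).
Local Notation F := (qform a).

Lemma qform_id6 : F id6 = 3 - 9 * a.
Proof. by rewrite /id6; crd_simpl; rewrite !crd_row6 //=; ring. Qed.

Lemma bform_E01_id6 k : bform a (k *: E01) id6 = 0.
Proof. by rewrite /E01 /id6; crd_simpl; rewrite !crd_row6 //=; ring. Qed.

Lemma Omega_ac_not_convex : 1/3 < a -> 0 < c -> ~ convex_A3 (Omega_ac a c).
Proof.
move=> ha c_gt0 hconv.
pose p := c + 1; pose k := 9 * a - 3; pose s := p + 2 * p / k.
have k_gt0 : 0 < k by rewrite /k; lra.
have p_gt0 : 0 < p by rewrite /p; lra.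
have sk : s * k = p * k + 2 * p by rewrite /s mulrDl divfK // lt0r_neq0.
have s_ge : p <= s by rewrite /s lerDl; apply: divr_ge0; lra.
have s2k : 2 * p ^+ 2 <= s ^+ 2 * k by rewrite expr2 -mulrA sk; nra.
have FP t : F (p *: E01 + t *: id6) = 2 * p ^+ 2 - t ^+ 2 * k.
  by rewrite qform_line qform_E01 bform_E01_id6 qform_id6 /k; ring.
have hin t : t ^+ 2 = s ^+ 2 -> Omega_ac a c (p *: E01 + t *: id6).
  by move=> ht; rewrite Omega_acE /= FP ht; lra.
have := hconv _ _ (1/2) (hin s erefl) (hin (- s) (sqrrN s)) ltac:(lra).
have -> : (1 - 1/2) *: (p *: E01 + s *: id6) + 1/2 *: (p *: E01 + (- s) *: id6)
    = p *: E01 + 0 *: id6.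
  by apply/rowP => i; rewrite !mxE; field.
by rewrite Omega_acE /= FP /p; nra.
Qed.

End NonConvexity.

Unset Implicit Arguments.

Theorem proposition3p10 (R : realType) (a c : R) :
  1 / 3 < a < 2 / 5 -> 0 < c ->
  bianchi_convex (Omega_ac a c) /\ ~ convex_A3 (Omega_ac a c).
Proof.
case/andP=> ha1 ha2 c_gt0; split.
- exact: Omega_ac_bianchi_convex c_gt0 (ltW ha2).
- exact: Omega_ac_not_convex ha1 c_gt0.
Qed.
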